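(* Let $n \ge 1$, $1 \le i \le n+1$, $0 \le k \le n$, $0 \le \ell \le n-k$ be integers. Let $T(n;i,k,\ell,m)$ denote the number of rooted trees on the vertex set $[n+1]=\{1,\ldots,n+1\}$ in which the root is $i$, the root has exactly $k$ children smaller than $i$ and exactly $\ell$ children larger than $i$, and the subtrees hanging from the children smaller than $i$ contain in total $m$ vertices (so the subtrees hanging from the children larger than $i$ contain in total $n-m$ vertices). Then $$\sum_{m=k}^{n-\ell} T(n;i,k,\ell,m) \;=\; \binom{i-1}{k}\binom{n+1-i}{\ell}\,(k+\ell)\,n^{\,n-k-\ell-1}.$$
   Context: A rooted tree on a vertex set $V$ is a tree with vertex set $V$ together with a distinguished vertex (the root). Removing the root from a rooted tree leaves a forest of rooted trees whose roots are the children of the root; the ''subtrees hanging from'' a set of children are the components of this forest rooted at those children. Vertices are compared by their integer labels. *)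

From mathcomp Require Import all_boot all_order all_algebra.
Set Implicit Arguments. Unset Strict Implicit. Unset Printing Implicit Defensive.

(* Vertices of [n+1] = {1,...,n+1} are represented by 'I_(n+1); the ordinal
   v stands for the label v+1.  The order on ordinals coincides with the
   order on labels. *)

Section Trees.
Variable V : finType.

Definition adj (E : {set {set V}}) : rel V := fun x y => [set x; y] \in E.

Definition is_tree (E : {set {set V}}) : bool :=
  [forall e in E, #|e| == 2] &&
  [forall x, forall y, connect (adj E) x y] &&
  (#|E| == #|V|.-1).

Definition adj_del (E : {set {set V}}) (r : V) : rel V :=
  fun x y => [&& x != r, y != r & adj E x y].

Definition children (E : {set {set V}}) (r : V) : {set V} :=
  [set c | adj E r c].

Definition subtree (E : {set {set V}}) (r c : V) : {set V} :=
  [set y | connect (adj_del E r) c y].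

End Trees.

Definition Tcount (n i k l m : nat) : nat :=
  let r : 'I_(n.+1) := inord i.-1 in
  #|[set E : {set {set 'I_(n.+1)}} |
      [&& is_tree E,
          #|[set c in children E r | c < r]| == k,
          #|[set c in children E r | r < c]| == l &
          \sum_(c in children E r | c < r) #|subtree E r c| == m]]|.

(* A tree on [V] rooted at [r] is the same thing as a parent map [f] fixing [r]
   whose iterates carry every vertex to [r]; the children of [r] are the
   vertices [x != r] with [f x = r].  More generally, count the maps that fix
   everything outside [X] and carry each point of [X] into [R] (forests on
   [X :|: R] rooted in [R]).  Sorting them by the set [J] of points sent
   directly into [R] gives [#|R| ^ #|J|] copies of the same problem for
   [X :\: J] and roots [J]; induction and the identity
   [\sum_j 'C(x, j) j s^j x^(x-j) = s x (s + x)^(x-1)] then give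
   [#|R| (#|X| + #|R|)^(#|X|-1)] such maps.  Hence exactly [#|S| n^(n-#|S|-1)]
   trees on [n+1] vertices give the root the set of children [S].
   The subtrees below distinct children are disjoint and avoid the root, so the
   range of [m] in the sum is no restriction: the sum counts all trees whose root
   has [k] smaller and [l] larger children, and choosing these children gives the
   two binomial factors. *)

From mathcomp Require Import all_boot all_order all_algebra.
From mathcomp Require Import ring zify.
Set Implicit Arguments. Unset Strict Implicit. Unset Printing Implicit Defensive.

Lemma card_fibers (T : finType) (U : eqType) (s : seq U) (Q : pred T) (g : T -> U) :
  uniq s -> \sum_(u <- s) #|[set x | Q x & g x == u]| = #|[set x | Q x & g x \in s]|.
Proof.
have card_ind (P : pred T) : #|[set x | P x]| = \sum_x (P x : nat).
  by rewrite -sum1_card big_mkcond; apply: eq_bigr => x _; rewrite inE; case: (P x).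
move=> s_uniq; rewrite card_ind (eq_bigr _ (fun u _ => card_ind _)) exchange_big /=.
apply: eq_bigr => x _; case: (Q x) => /=; last by rewrite big1.
rewrite (eq_bigr (fun u => if u == g x then 1 else 0)) => [|u _]; last by rewrite eq_sym.
by rewrite -big_mkcond sum1_count count_uniq_mem.
Qed.

Lemma leq_sum_card_disjoint (I T : finType) (P : pred I) (A : I -> {set T}) (B : {set T}) :
  (forall i j, P i -> P j -> i != j -> [disjoint A i & A j]) ->
  (forall i, P i -> A i \subset B) ->
  \sum_(i | P i) #|A i| <= #|B|.
Proof.
move=> disjA subAB.
have card_ind (C : {set T}) : #|C| = \sum_y (y \in C : nat).
  by rewrite -sum1_card big_mkcond.
rewrite card_ind (eq_bigr _ (fun i _ => card_ind (A i))) exchange_big leq_sum // => y _.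
have [i0 /andP [Pi0 yAi0] | none] := pickP (fun i => P i && (y \in A i)); last first.
  by rewrite big1 // => i Pi; move: (none i); rewrite Pi => /= ->.
rewrite (bigD1 i0) //= big1 ?addn0 => [|i /andP [Pi ii0]].
  by rewrite yAi0 (subsetP (subAB _ Pi0)).
apply/eqP; rewrite eqb0; apply: contraTN yAi0 => yAi.
by rewrite (disjointFr (disjA _ _ Pi Pi0 ii0) yAi).
Qed.

Lemma fconnect_iterP (T : finType) (f : T -> T) x y :
  fconnect f x y -> exists k, iter k f x = y.
Proof. by move=> xy; exists (findex f x y); apply: iter_findex. Qed.

Lemma index_binomial_sum x s :
  \sum_(j < x.+1) 'C(x, j) * (s ^ j * j * x ^ (x - j)) = s * x * (s + x) ^ x.-1.
Proof.
case: x => [|x]; first by rewrite big_ord_recl big_ord0 /= !muln0.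
rewrite big_ord_recl /= !muln0 add0n (addnC s) expnDn big_distrr /=.
apply: eq_bigr => j _; rewrite /bump /= add1n subSS expnS.
have e : 'C(x.+1, j.+1) * j.+1 = x.+1 * 'C(x, j) by rewrite mulnC -mul_bin_diag.
transitivity ('C(x.+1, j.+1) * j.+1 * s * s ^ j * x.+1 ^ (x - j)); first ring.
by rewrite e; ring.
Qed.

(** * Forest maps *)

Section ForestFunctions.
Variable T : finType.
Implicit Types (X R J : {set T}) (f g h : {ffun T -> T}).

(* The parent maps of the forests on [X :|: R] whose roots are the points of [R],
   extended by the identity outside [X]. *)
Definition forest_fun X R := [set f : {ffun T -> T} | [forall x, if x \in X then
  (f x \in X :|: R) && [exists y in R, fconnect f x y] else f x == x]].

Lemma forest_funP X R f : reflect (forall x, if x \in X then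
  (f x \in X :|: R) /\ (exists2 y, y \in R & fconnect f x y) else f x = x)
  (f \in forest_fun X R).
Proof.
rewrite inE; apply: (iffP forallP) => H x; move: (H x); case: (x \in X) => //=.
- by case/andP=> -> /exists_inP.
- by move/eqP.
- by case=> -> /exists_inP ->.
- by move=> ->.
Qed.

Definition root_children X R f := [set x in X | f x \in R].

Definition fun_into J R := [set h : {ffun T -> T} |
  [forall x, if x \in J then h x \in R else h x == x]].

Definition glue J (gh : {ffun T -> T} * {ffun T -> T}) : {ffun T -> T} :=
  [ffun x => if x \in J then gh.2 x else gh.1 x].

Lemma card_fun_into J R : #|fun_into J R| = #|R| ^ #|J|.
Proof.
have -> : #|fun_into J R| =
    #|family (fun x : T => if x \in J then mem R else mem (pred1 x))|.
  apply: eq_card => h; rewrite inE; apply/forallP/familyP => H x;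
  by move: (H x); case: (x \in J) => //= /eqP.
rewrite card_family foldrE big_map big_enum /= (bigID (mem J)) /=.
rewrite [X in _ * X]big1 => [|x /negbTE ->]; last by rewrite card1.
by rewrite muln1 (eq_bigr (fun _ => #|R|)) ?prod_nat_const // => x ->.
Qed.

Section Fiber.
Variables X R J : {set T}.
Hypotheses (disjXR : [disjoint X & R]) (subJX : J \subset X).

Lemma glue_forest_fun g h : g \in forest_fun (X :\: J) J -> h \in fun_into J R ->
  glue J (g, h) \in forest_fun X R /\ root_children X R (glue J (g, h)) = J.
Proof.
move=> /forest_funP Gg; rewrite inE => /forallP Hh.
set gh := glue J (g, h).
have hR x : x \in J -> h x \in R by move=> xJ; have := Hh x; rewrite xJ.
have JX x : x \in J -> x \in X by apply: (subsetP subJX).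
have XnR x : x \in X -> x \notin R by move=> xX; rewrite (disjointFr disjXR).
have gX x : x \in X -> x \notin J -> g x \in X.
  move=> xX xJ; have := Gg x; rewrite inE xJ xX /=; case=> /setUP [] //.
    by rewrite inE => /andP [].
  by move/JX.
(* Before entering R, the orbit of [gh] follows that of [g]. *)
have orbit_gh x k : iter k gh x = iter k g x \/ iter k gh x \in R.
  elim: k => [|k [IH|IH]] /=; first by left.
  - rewrite ffunE /= IH; case: ifP => kJ; [right; exact: hR | by left].
  - right; rewrite ffunE /=.
    have nJ : iter k gh x \notin J by apply: contraL IH => /JX/XnR.
    have nX : iter k gh x \notin X by apply: contraL IH; apply: XnR.
    by have := Gg (iter k gh x); rewrite inE (negbTE nJ) (negbTE nX) => ->.
split; last first.
  apply/setP => x; rewrite inE ffunE /=.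
  case: (boolP (x \in J)) => xJ; first by rewrite JX ?hR.
  case: (boolP (x \in X)) => //= xX.
  exact/negbTE/XnR/gX.
apply/forest_funP => x; rewrite ffunE /=.
case: (boolP (x \in X)) => xX; last first.
  have xJ : x \notin J by apply: contraNN xX; apply: JX.
  by rewrite (negbTE xJ); have := Gg x; rewrite inE (negbTE xX) andbF.
case: (boolP (x \in J)) => xJ.
  split; first by rewrite inE hR ?orbT.
  exists (h x); first exact: hR.
  by have := fconnect1 gh x; rewrite ffunE /= xJ.
split; first by rewrite inE gX.
have := Gg x; rewrite inE xJ xX /=; case=> _ [y yJ /fconnect_iterP [k gk]].
case: (orbit_gh x k) => [e|e]; last by exists (iter k gh x); rewrite ?fconnect_iter.
exists (iter k.+1 gh x); last exact: fconnect_iter.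
by rewrite /= e gk ffunE /= yJ hR.
Qed.

Lemma forest_fun_split f : f \in forest_fun X R -> root_children X R f = J ->
  exists2 gh, gh \in setX (forest_fun (X :\: J) J) (fun_into J R) & f = glue J gh.
Proof.
move=> /forest_funP Ff rcJ.
have inJ x : (x \in J) = (x \in X) && (f x \in R) by rewrite -rcJ inE.
pose g := [ffun x => if x \in J then x else f x].
pose h := [ffun x => if x \in J then f x else x].
exists (g, h); last by apply/ffunP => x; rewrite !ffunE /=; case: ifP => // ->.
apply/setXP; split; last first.
  rewrite inE; apply/forallP => x; rewrite ffunE; case: ifP => xJ; rewrite xJ //.
  by move: xJ; rewrite inJ => /andP [].
apply/forest_funP => x; rewrite !ffunE.
case: ifP => [/setDP [xX xJ] | xXJ]; last first.
  case: ifP => // xJ; have := Ff x.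
  by case: ifP => // xX; move: xXJ; rewrite inE xJ xX.
rewrite (negbTE xJ); have := Ff x; rewrite xX.
case=> fxXR [y yR /fconnect_iterP [k fk]].
have fxX : f x \in X.
  by case/setUP: fxXR => // fxR; move: xJ; rewrite inJ xX fxR.
split.
  by rewrite !inE; case: (f x \in J); rewrite ?orbT ?fxX.
(* Until it enters [J], the orbit of [g] follows that of [f], which reaches [R]. *)
have orbit_g i : iter i g x \in J \/ iter i f x = iter i g x /\ iter i g x \in X :\: J.
  elim: i => [|i [IH|[IH1 IH2]]] /=; first by right; rewrite inE xJ xX.
  - by left; rewrite ffunE IH.
  - move: IH2; rewrite inE => /andP [nJ iX]; rewrite ffunE (negbTE nJ) IH1.
    case: (boolP (f (iter i g x) \in J)) => fJ; first by left.
    right; split => //; rewrite inE fJ /=.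
    have := Ff (iter i g x); rewrite iX; case=> /setUP [] // fR _.
    by move: nJ; rewrite inJ iX fR.
case: (orbit_g k) => [kJ | [e1 e2]].
  by exists (iter k g x); rewrite ?fconnect_iter.
by move: e2 yR; rewrite inE -e1 fk => /andP [_ /(disjointFr disjXR) ->].
Qed.

Lemma glue_inj : {in setX (forest_fun (X :\: J) J) (fun_into J R) &, injective (glue J)}.
Proof.
have fixJ g x : g \in forest_fun (X :\: J) J -> x \in J -> g x = x.
  by move=> /forest_funP /(_ x) + xJ; rewrite !inE xJ.
move=> [g h] [g' h'] /setXP [/= Gg]; rewrite inE => /forallP Hh.
move=> /setXP [/= Gg']; rewrite inE => /forallP Hh' /ffunP e.
congr pair; apply/ffunP => x; move: (e x); rewrite !ffunE /=.
  by case: ifP => // xJ _; rewrite (fixJ _ _ Gg xJ) (fixJ _ _ Gg' xJ).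
case: ifP => // /negbT xJ.
by have := Hh x; have := Hh' x; rewrite (negbTE xJ) => /eqP -> /eqP ->.
Qed.

Lemma card_forest_fun_fiber :
  #|[set f in forest_fun X R | root_children X R f == J]| =
  #|R| ^ #|J| * #|forest_fun (X :\: J) J|.
Proof.
have -> : [set f in forest_fun X R | root_children X R f == J] =
    glue J @: setX (forest_fun (X :\: J) J) (fun_into J R).
  apply/setP => f; rewrite inE; apply/andP/imsetP => [[Ff /eqP tJ] | [[g h] gh ->]].
    by have [gh ? ->] := forest_fun_split Ff tJ; exists gh.
  by case/setXP: gh => /= Gg Hh; have [-> ->] := glue_forest_fun Gg Hh.
by rewrite card_in_imset ?cardsX ?card_fun_into 1?mulnC //; apply: glue_inj.
Qed.

End Fiber.

Lemma forest_fun0 R : forest_fun set0 R = [set [ffun x => x]].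
Proof.
apply/setP => f; rewrite inE; apply/forest_funP/eqP => [Ff | -> x].
  by apply/ffunP => x; have := Ff x; rewrite inE ffunE.
by rewrite inE ffunE.
Qed.

Lemma forest_fun_roots0 X : X != set0 -> forest_fun X set0 = set0.
Proof.
case/set0Pn => x xX; apply/setP => f; rewrite in_set0; apply/negP => /forest_funP Ff.
by have := Ff x; rewrite xX => -[_ [y]]; rewrite inE.
Qed.

Lemma card_forest_fun_partition X R : #|forest_fun X R| =
  \sum_(J in powerset X) #|[set f in forest_fun X R | root_children X R f == J]|.
Proof.
rewrite -big_enum (card_fibers (fun f => f \in forest_fun X R)) ?enum_uniq //.
apply: eq_card => f; rewrite !inE mem_enum powersetE andb_idr // => _.
by apply/subsetP => x; rewrite inE => /andP [].
Qed.

Lemma sum_powerset_card X (G : nat -> nat) :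
  \sum_(J in powerset X) G #|J| = \sum_(j < #|X|.+1) 'C(#|X|, j) * G j.
Proof.
rewrite (partition_big (fun J : {set T} => inord #|J| : 'I_#|X|.+1) xpredT) //=.
apply: eq_bigr => j _.
have cardJ J : J \in powerset X -> (inord #|J| == j :> 'I_#|X|.+1) = (#|J| == j).
  rewrite powersetE => JX; apply/eqP/eqP => [<- | eJ]; last by rewrite eJ inord_val.
  by rewrite inordK // ltnS subset_leq_card.
rewrite (eq_bigr (fun _ => G j)) => [|J /andP [JX /eqP <-]]; last first.
  by rewrite inordK // ltnS subset_leq_card // -powersetE.
rewrite sum_nat_const -cards_draws; congr (_ * _); apply: eq_card => J.
rewrite !inE unfold_in /= -powersetE.
by case: (boolP (J \in powerset X)) => //= JX; rewrite cardJ.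
Qed.

Lemma card_forest_fun X R : [disjoint X & R] ->
  #|forest_fun X R| * (#|X| + #|R|) = #|R| * (#|X| + #|R|) ^ #|X|.
Proof.
move Xx: #|X| => x; elim/ltn_ind: x X Xx R => x IH X Xx R disjXR.
have [X0 | X0] := eqVneq X set0.
  by move: Xx; rewrite X0 forest_fun0 cards1 cards0 => <-; rewrite mul1n muln1.
have x_gt0 : 0 < x by rewrite -Xx card_gt0.
set s := #|R|.
have fiber_term J : J \in powerset X ->
    #|[set f in forest_fun X R | root_children X R f == J]| * x =
    s ^ #|J| * #|J| * x ^ (x - #|J|).
  rewrite powersetE => JX; rewrite card_forest_fun_fiber //.
  have [-> | J0] := eqVneq J set0.
    by rewrite setD0 forest_fun_roots0 ?cards0 ?muln0.
  have disjJ : [disjoint X :\: J & J] by have /subsetDP [] := subxx (X :\: J).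
  have JXx : #|J| <= x by rewrite -Xx subset_leq_card.
  have J_gt0 : 0 < #|J| by rewrite card_gt0.
  have ltXJ : #|X :\: J| < x by rewrite cardsDS // Xx; lia.
  have := IH _ ltXJ (X :\: J) erefl J disjJ; rewrite cardsDS // Xx subnK //.
  by move=> IHJ; rewrite -mulnA IHJ mulnA.
have : #|forest_fun X R| * x = s * x * (s + x) ^ x.-1.
  rewrite card_forest_fun_partition big_distrl (eq_bigr _ fiber_term) /=.
  by rewrite (sum_powerset_card X (fun j => s ^ j * j * x ^ (x - j))) Xx index_binomial_sum.
case: x x_gt0 {IH Xx fiber_term} => // x _ /= e.
have -> : #|forest_fun X R| = s * (s + x.+1) ^ x.
  by apply/eqP; rewrite -(eqn_pmul2r (ltn0Sn x)) e; apply/eqP; ring.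
by rewrite expnS (addnC s); ring.
Qed.

End ForestFunctions.

(** * Rooted trees as parent maps *)

Lemma eq_set2 (T : finType) (a b c d : T) :
  [set a; b] = [set c; d] -> (a = c /\ b = d) \/ (a = d /\ b = c).
Proof.
move=> e.
have /set2P ha : a \in [set c; d] by rewrite -e set21.
have /set2P hb : b \in [set c; d] by rewrite -e set22.
have /set2P hc : c \in [set a; b] by rewrite e set21.
have /set2P hd : d \in [set a; b] by rewrite e set22.
by case: ha hb hc hd => ? [] ? [] ? [] ?; subst; auto.
Qed.

Lemma adj_sym (T : finType) (E : {set {set T}}) : symmetric (adj E).
Proof. by move=> x y; rewrite /adj setUC. Qed.

Section ParentFunctions.
Variables (V : finType) (r : V).

Definition parent_funs := forest_fun [set~ r] [set r].

Definition edges_of (f : {ffun V -> V}) : {set {set V}} :=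
  [set [set x; f x] | x in [set~ r]].

Section OneParentFunction.
Variable f : {ffun V -> V}.
Hypothesis f_parent : f \in parent_funs.

Lemma parent_root : f r = r.
Proof. by move/forest_funP: f_parent => /(_ r); rewrite !inE eqxx. Qed.

Lemma parent_reach x : fconnect f x r.
Proof.
have [-> | xr] := eqVneq x r; first exact: connect0.
by move/forest_funP: f_parent => /(_ x); rewrite !inE xr => -[_ [y /set1P ->]].
Qed.

Lemma iter_parent_root k : iter k f r = r.
Proof. exact/iter_fix/parent_root. Qed.

Lemma parent_neq x : x != r -> f x != x.
Proof.
move=> xr; apply: contra_neq xr => fx.
by have [k <-] := fconnect_iterP (parent_reach x); rewrite iter_fix.
Qed.

Lemma parent_parent_neq x : x != r -> f (f x) != x.
Proof.
move=> xr; apply/eqP => ffx.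
have orbit2 k : iter k f x = x \/ iter k f x = f x.
  by elim: k => [|k [IH|IH]] /=; rewrite ?IH ?ffx; auto.
have [k] := fconnect_iterP (parent_reach x).
case: (orbit2 k) => -> e; first by rewrite e eqxx in xr.
by move: xr; rewrite -ffx e parent_root eqxx.
Qed.

Lemma card_edges_of : #|edges_of f| = #|V|.-1.
Proof.
rewrite card_in_imset ?cardsC1 // => x y; rewrite !inE => xr yr.
case/eq_set2 => [[] // | [exy eyx]].
by move: (parent_parent_neq xr); rewrite eyx -exy eqxx.
Qed.

Lemma adj_edges_ofP x y : adj (edges_of f) x y ->
  (x != r /\ y = f x) \/ (y != r /\ x = f y).
Proof.
by case/imsetP => z; rewrite !inE => zr /eq_set2 [[-> ->] | [-> ->]]; [left | right].
Qed.

Lemma adj_edges_of_parent x : x != r -> adj (edges_of f) x (f x).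
Proof. by move=> xr; apply/imsetP; exists x; rewrite // !inE. Qed.

Lemma edges_of_tree : is_tree (edges_of f).
Proof.
rewrite /is_tree card_edges_of eqxx andbT; apply/andP; split.
  apply/forall_inP => e /imsetP [z]; rewrite !inE => zr ->.
  by rewrite cards2 (eq_sym z) parent_neq.
have to_root x : connect (adj (edges_of f)) x r.
  have [k] := fconnect_iterP (parent_reach x).
  elim: k x => [|k IH] x; first by move=> /= ->; apply: connect0.
  rewrite iterSr => /IH; have [-> | xr] := eqVneq x r; first by move=> _; apply: connect0.
  by apply/connect_trans/connect1/adj_edges_of_parent.
apply/forallP => x; apply/forallP => y; apply: connect_trans (to_root x) _.
by rewrite (sym_connect_sym (@adj_sym _ _)) to_root.
Qed.

Lemma children_edges_of : children (edges_of f) r = root_children [set~ r] [set r] f.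
Proof.
apply/setP => c; rewrite !inE; apply/idP/idP.
  case/adj_edges_ofP => [[] | [cr ->]]; first by rewrite eqxx.
  by rewrite eqxx andbT eq_sym parent_neq.
by case/andP => cr /eqP fc; rewrite adj_sym -fc adj_edges_of_parent.
Qed.

End OneParentFunction.

Lemma edges_of_inj : {in parent_funs &, injective edges_of}.
Proof.
move=> f g Ff Fg e; apply/ffunP => x.
have [k] := fconnect_iterP (parent_reach Fg x).
elim: k x => [|k IH] x; first by move=> /= ->; rewrite !parent_root.
rewrite iterSr; have [-> _ | xr /IH efg] := eqVneq x r; first by rewrite !parent_root.
have : [set x; g x] \in edges_of f by rewrite e; apply/imsetP; exists x; rewrite // !inE.
case/imsetP => z; rewrite !inE => zr /eq_set2 [[<- ->] // | [exz egx]].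
by move: (parent_parent_neq Fg xr); rewrite -efg egx -exz eqxx.
Qed.

End ParentFunctions.

Section TreeParent.
Variables (V : finType) (r : V) (E : {set {set V}}).
Hypothesis E_tree : is_tree E.

Definition ball k := iter k (fun B : {set V} =>
  B :|: [set y | [exists x in B, adj E x y]]) [set r].

Lemma ballS k : ball k.+1 = ball k :|: [set y | [exists x in ball k, adj E x y]].
Proof. by []. Qed.

Lemma ball_path p x j : x \in ball j -> path (adj E) x p ->
  last x p \in ball (j + size p).
Proof.
elim: p x j => [|y p IH] x j /=; first by rewrite addn0.
move=> xB /andP [xy yp]; rewrite addnS -addSn; apply: IH yp.
by rewrite ballS !inE; apply/orP; right; apply/exists_inP; exists x.
Qed.

Lemma ball_exists x : exists k, x \in ball k.
Proof.
case/andP: E_tree => /andP [_ /forallP /(_ r) /forallP /(_ x) /connectP [p rp ->]] _.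
by exists (size p); have := ball_path (j := 0) _ rp; apply; rewrite set11.
Qed.

Definition depth x := ex_minn (ball_exists x).

Lemma depth_ball x : x \in ball (depth x).
Proof. by rewrite /depth; case: ex_minnP. Qed.

Lemma depth_min x k : x \in ball k -> depth x <= k.
Proof. by rewrite /depth; case: ex_minnP => d _; apply. Qed.

Lemma depth_parent_exists x : x != r -> exists y, adj E y x && (depth y < depth x).
Proof.
move=> xr; have := depth_ball x; have := @depth_min x.
case: (depth x) => [_ | d min_d]; first by rewrite inE (negbTE xr).
rewrite ballS inE => /orP [/min_d | /[!inE] /exists_inP [y yB yx]]; first by rewrite ltnn.
by exists y; rewrite yx ltnS depth_min.
Qed.

Definition parent_of : {ffun V -> V} := [ffun x => if x == r then r
  else odflt r [pick y | adj E y x && (depth y < depth x)]].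

Lemma parent_ofP x : x != r -> adj E (parent_of x) x && (depth (parent_of x) < depth x).
Proof.
move=> xr; rewrite ffunE (negbTE xr); case: pickP => [y // | none].
by have [y] := depth_parent_exists xr; rewrite none.
Qed.

Lemma parent_of_reach x : fconnect parent_of x r.
Proof.
have [d] := ubnP (depth x); elim: d x => // d IH x /ltnSE x_d.
have [-> | xr] := eqVneq x r; first exact: connect0.
apply: connect_trans (fconnect1 _ x) (IH _ _).
by case/andP: (parent_ofP xr) => _ /leq_trans; apply.
Qed.

Lemma parent_of_parent_fun : parent_of \in parent_funs r.
Proof.
apply/forest_funP => x; rewrite !inE; have [-> | xr] := eqVneq x r.
  by rewrite ffunE eqxx.
split; first by case: (parent_of x == r); rewrite ?orbT.
by exists r; rewrite ?inE ?parent_of_reach.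
Qed.

(* Both edge sets have [#|V|.-1] elements, so inclusion suffices. *)
Lemma edges_of_parent_of : edges_of r parent_of = E.
Proof.
apply/eqP; rewrite eqEcard (card_edges_of parent_of_parent_fun).
case/andP: E_tree => _ /eqP ->; rewrite leqnn andbT.
apply/subsetP => e /imsetP [x]; rewrite !inE => xr ->.
by case/andP: (parent_ofP xr); rewrite /adj setUC.
Qed.

End TreeParent.

(** * Subtrees hanging from the root *)

Section Subtrees.
Variables (V : finType) (r : V) (f : {ffun V -> V}).
Hypothesis f_parent : f \in parent_funs r.

Definition descendants c := [set y | fconnect f y c].

Lemma subtree_sub_descendants c : f c = r -> c != r ->
  subtree (edges_of r f) r c \subset descendants c.
Proof.
move=> fc cr; apply/subsetP => y; rewrite !inE => /connectP [p cp ->] {y}.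
suff walk x q : fconnect f x c -> path (adj_del (edges_of r f) r) x q ->
    fconnect f (last x q) c by apply: walk cp; apply: connect0.
elim: q x => [|z q IH] x //= xc /andP [/and3P [xr zr xz] zq].
apply: IH zq; case/adj_edges_ofP: xz => [[_ ezx] | [_ exz]]; last first.
  by apply: connect_trans (fconnect1 f z) _; rewrite -exz.
have [[|k] /= xk] := fconnect_iterP xc; first by move: zr; rewrite ezx xk fc eqxx.
by rewrite ezx -xk -[f (iter k f x)]/(iter k.+1 f x) iterSr fconnect_iter.
Qed.

Lemma child_ancestor_unique y c c' : f c = r -> f c' = r -> c != r -> c' != r ->
  fconnect f y c -> fconnect f y c' -> c = c'.
Proof.
(* The orbit of [y] is stuck at [r] one step after visiting a child of [r]. *)
have past_child a b d d' : f d = r -> d' != r -> a < b ->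
    iter a f y = d -> iter b f y = d' -> False.
  move=> fd d'r ab ad bd'; move: d'r.
  by rewrite -bd' -(subnK ab) iterD iterS ad fd (iter_parent_root f_parent) eqxx.
move=> fc fc' cr cr' /fconnect_iterP [a ac] /fconnect_iterP [b bc'].
case: (ltngtP a b) => [ab | ba | eab]; first by case: (past_child a b c c').
  by case: (past_child b a c' c).
by rewrite -ac -bc' eab.
Qed.

Lemma sum_card_subtree_le (Cs Cl : {set V}) :
  Cs \subset children (edges_of r f) r -> Cl \subset children (edges_of r f) r ->
  [disjoint Cs & Cl] ->
  \sum_(c in Cs) #|subtree (edges_of r f) r c| + #|Cl| <= #|V|.-1.
Proof.
rewrite (children_edges_of f_parent) => subCs subCl disjCsl.
have child c : c \in root_children [set~ r] [set r] f -> c != r /\ f c = r.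
  by rewrite !inE => /andP [-> /eqP].
have ClV : Cl \subset [set~ r] by apply/subsetP => c /(subsetP subCl) /child [cr _]; rewrite !inE.
have Cs_desc c : c \in Cs -> descendants c \subset [set~ r] :\: Cl.
  move=> cCs; have [cr fc] := child _ (subsetP subCs _ cCs).
  apply/subsetP => y; rewrite !inE => yc; apply/andP; split.
    apply: contraTN cCs => yCl; have [yr fy] := child _ (subsetP subCl _ yCl).
    by rewrite -(child_ancestor_unique fy fc yr cr (connect0 _ y) yc) (disjointFl disjCsl yCl).
  apply: contra_neq cr => yr; move: yc; rewrite yr => /fconnect_iterP [k <-].
  by rewrite (iter_parent_root f_parent).
have disj_desc c c' : c \in Cs -> c' \in Cs -> c != c' ->
    [disjoint descendants c & descendants c'].
  move=> /(subsetP subCs) /child [cr fc] /(subsetP subCs) /child [c'r fc'] cc'.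
  rewrite -setI_eq0; apply/eqP/setP => y; rewrite !inE; apply/negbTE/andP => -[yc yc'].
  by move: cc'; rewrite (child_ancestor_unique fc fc' cr c'r yc yc') eqxx.
have le_desc : \sum_(c in Cs) #|subtree (edges_of r f) r c| <= #|[set~ r] :\: Cl|.
  apply: leq_trans (leq_sum_card_disjoint disj_desc Cs_desc).
  apply: leq_sum => c /(subsetP subCs) /child [cr fc].
  exact/subset_leq_card/subtree_sub_descendants.
rewrite addnC -leq_subRL; last by rewrite -(cardsC1 r) subset_leq_card.
by rewrite -(cardsC1 r) -cardsDS.
Qed.

End Subtrees.

(** * Counting trees by the children of the root *)

Section TreesWithGivenChildren.
Variables (V : finType) (r : V).

Lemma children_tree_sub E : is_tree E -> children E r \subset [set~ r].
Proof.
case/andP => /andP [/forall_inP edges2 _] _; apply/subsetP => c; rewrite !inE.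
by move=> /edges2; apply: contraTneq => ->; rewrite setUid cards1.
Qed.

Lemma card_trees_children (S : {set V}) : S \subset [set~ r] ->
  #|[set E | is_tree E & children E r == S]| * #|V|.-1 =
  #|S| * #|V|.-1 ^ (#|V|.-1 - #|S|).
Proof.
move=> S_r.
have -> : [set E | is_tree E & children E r == S] =
    edges_of r @: [set f in parent_funs r | root_children [set~ r] [set r] f == S].
  apply/setP => E; rewrite inE; apply/andP/imsetP => [[tE /eqP chS] | [f /setIdP [Ff tS] ->]].
    exists (parent_of r tE); last by rewrite edges_of_parent_of.
    have Fp := parent_of_parent_fun r tE.
    by rewrite inE Fp -(children_edges_of Fp) edges_of_parent_of chS eqxx.
  by rewrite edges_of_tree // children_edges_of.
rewrite card_in_imset => [|f g /setIdP [Ff _] /setIdP [Fg _]]; last exact: edges_of_inj.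
have disj_r : [disjoint [set~ r] & [set r]] by rewrite -setI_eq0 setIC setICr.
rewrite card_forest_fun_fiber // cards1 exp1n mul1n.
have disjS : [disjoint [set~ r] :\: S & S] by have /subsetDP [] := subxx ([set~ r] :\: S).
have := card_forest_fun disjS; rewrite cardsDS // cardsC1 subnK //.
by rewrite -(cardsC1 r) subset_leq_card.
Qed.

End TreesWithGivenChildren.

Lemma card_split_draws (T : finType) (L U : {set T}) k l : [disjoint L & U] ->
  #|[set S : {set T} | S \subset L :|: U & (#|S :&: L| == k) && (#|S :&: U| == l)]| =
  'C(#|L|, k) * 'C(#|U|, l).
Proof.
move=> disjLU.
have split_eq (A B : {set T}) : A \subset L -> B \subset U ->
    (A :|: B) :&: L = A /\ (A :|: B) :&: U = B.
  move=> AL BU; rewrite !setIUl (setIidPl AL) (setIidPl BU).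
  rewrite (disjoint_setI0 (disjointWl AL disjLU)).
  by rewrite (disjoint_setI0 (disjointWl BU _)) ?setU0 ?set0U // disjoint_sym.
pose draws (C : {set T}) j := [set A : {set T} | A \subset C & #|A| == j].
have -> : [set S : {set T} | S \subset L :|: U & (#|S :&: L| == k) && (#|S :&: U| == l)] =
    (fun AB => AB.1 :|: AB.2) @: setX (draws L k) (draws U l).
  apply/setP => S; rewrite inE; apply/idP/imsetP.
    case/and3P => SLU SLk SUl; exists (S :&: L, S :&: U); first by rewrite !inE !subsetIr SLk SUl.
    by rewrite /= -setIUr (setIidPl SLU).
  case=> -[A B] /setXP [/=]; rewrite !inE => /andP [AL Ak] /andP [BU Bl] ->.
  by have [-> ->] := split_eq _ _ AL BU; rewrite setUSS ?Ak.
rewrite card_in_imset ?cardsX ?cards_draws // => -[A B] [A' B'].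
rewrite /draws !inE /= => /and3P [/andP [AL _] BU _] /and3P [/andP [A'L _] B'U _] e.
have [eA eB] := split_eq _ _ AL BU; have [eA' eB'] := split_eq _ _ A'L B'U.
by congr pair; [rewrite -eA -eA' e | rewrite -eB -eB' e].
Qed.

Lemma card_ord_lt n (r : 'I_n) : #|[set c : 'I_n | c < r]| = r.
Proof.
have -> : [set c : 'I_n | c < r] = widen_ord (ltnW (ltn_ord r)) @: [set: 'I_r].
  apply/setP => c; rewrite inE; apply/idP/imsetP => [cr | [d _ ->]]; last exact: (ltn_ord d).
  by exists (Ordinal cr); last apply: val_inj.
rewrite card_imset ?cardsT ?card_ord // => a b /(congr1 val) eab.
exact: val_inj.
Qed.

Section RootSplit.
Variables (n : nat) (r : 'I_n.+1).

Definition root_split k l (S : {set 'I_n.+1}) :=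
  (#|[set c in S | c < r]| == k) && (#|[set c in S | r < c]| == l).

Lemma card_root_split k l :
  #|[set S : {set 'I_n.+1} | S \subset [set~ r] & root_split k l S]| = 'C(r, k) * 'C(n - r, l).
Proof.
pose L := [set c : 'I_n.+1 | c < r]; pose U := [set c : 'I_n.+1 | r < c].
have disjLU : [disjoint L & U].
  by rewrite -setI_eq0; apply/eqP/setP => c; rewrite !inE; apply/negbTE; case: ltngtP.
have r_LU : [set~ r] = L :|: U by apply/setP => c; rewrite !inE neq_ltn.
have cardU : #|U| = n - r.
  have := cardsC1 r; rewrite r_LU cardsU (disjoint_setI0 disjLU) cards0 subn0 card_ord.
  by rewrite /L card_ord_lt /=; lia.
transitivity ('C(#|L|, k) * 'C(#|U|, l)); last by rewrite cardU /L card_ord_lt.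
rewrite -card_split_draws // r_LU.
by apply: eq_card => S; rewrite !inE /root_split !setIdE.
Qed.

Lemma card_trees_root_split k l :
  #|[set E | is_tree E & root_split k l (children E r)]| * n =
  'C(r, k) * 'C(n - r, l) * ((k + l) * n ^ (n - (k + l))).
Proof.
set A := [set S : {set 'I_n.+1} | S \subset [set~ r] & root_split k l S].
have -> : [set E | is_tree E & root_split k l (children E r)] =
    [set E | is_tree E & children E r \in enum A].
  apply/setP => E; rewrite !inE mem_enum inE.
  by case: (boolP (is_tree E)) => //= /(children_tree_sub r) ->.
rewrite -card_fibers ?enum_uniq // big_enum big_distrl /= -card_root_split -sum_nat_const.
apply: eq_bigr => S; rewrite inE => /andP [S_r /andP [/eqP Sk /eqP Sl]].
have cardS : #|S| = k + l.
  rewrite -Sk -Sl -(cardsID [set c : 'I_n.+1 | c < r] S) !setIdE; congr (_ + _).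
  apply: eq_card => c; rewrite !inE andbC; case cS: (c \in S) => //=.
  by move: (subsetP S_r c cS); rewrite !inE neq_ltn; case: ltngtP.
by have := card_trees_children S_r; rewrite card_ord cardS.
Qed.

Lemma sum_card_subtree_bounds k l E : is_tree E -> root_split k l (children E r) ->
  k <= \sum_(c in children E r | c < r) #|subtree E r c| <= n - l.
Proof.
move=> tE /andP [/eqP Sk /eqP Sl]; apply/andP; split.
  rewrite -Sk -sum1dep_card; apply: leq_sum => c _.
  by rewrite card_gt0; apply/set0Pn; exists c; rewrite inE connect0.
have sub (P : pred 'I_n.+1) : [set c in children E r | P c] \subset children E r.
  by rewrite setIdE subsetIl.
have disj : [disjoint [set c in children E r | c < r] & [set c in children E r | r < c]].
  rewrite -setI_eq0; apply/eqP/setP => c; rewrite !inE; apply/negbTE.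
  by case: ltngtP; rewrite ?andbF.
have := sum_card_subtree_le (parent_of_parent_fun r tE).
rewrite edges_of_parent_of card_ord => /(_ _ _ (sub _) (sub _) disj).
by rewrite Sl; under eq_bigl => c do rewrite inE; lia.
Qed.

End RootSplit.

Lemma sum_Tcount_mul n i k l : 1 <= i <= n.+1 ->
  (\sum_(k <= m < (n - l).+1) Tcount n i k l m) * n =
  'C(i.-1, k) * 'C(n.+1 - i, l) * ((k + l) * n ^ (n - (k + l))).
Proof.
case/andP => i_gt0 i_le; set r : 'I_n.+1 := inord i.-1.
have r_val : (r : nat) = i.-1 by rewrite inordK //; lia.
transitivity (#|[set E | is_tree E & root_split r k l (children E r)]| * n); last first.
  by rewrite card_trees_root_split r_val (_ : n - i.-1 = n.+1 - i) //; lia.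
congr (_ * _).
pose g E := \sum_(c in children E r | c < r) #|subtree E r c|.
transitivity #|[set E | is_tree E && root_split r k l (children E r) &
                        g E \in index_iota k (n - l).+1]|.
  rewrite -card_fibers ?iota_uniq //; apply: eq_bigr => m _; apply: eq_card => E.
  by rewrite /Tcount -/r !inE /root_split !andbA.
apply: eq_card => E; rewrite !inE mem_index_iota ltnS.
by case: (boolP (is_tree E)) => //= tE; apply: andb_idr; apply: sum_card_subtree_bounds.
Qed.

Import GRing.Theory Num.Theory.
Local Open Scope ring_scope.

Theorem mainTheorem2 (n i k l : nat) :
  (1 <= n)%N -> (1 <= i <= n.+1)%N -> (k <= n)%N -> (l <= n - k)%N ->
  ((\sum_(k <= m < (n - l).+1) Tcount n i k l m)%N%:R : rat) =
  ('C(i.-1, k))%:R * ('C(n.+1 - i, l))%:R * (k + l)%:R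
    * (n%:R : rat) ^ (n%:Z - (k + l)%:Z - 1).
Proof.
move=> n_gt0 i_range k_le l_le.
have n_neq0 : (n%:R : rat) != 0 by rewrite pnatr_eq0 -lt0n.
have -> : (n%:Z - (k + l)%:Z - 1)%R = (n - (k + l))%N%:Z + (-1) by rewrite -subzn //; lia.
rewrite expfzDr // exprN1; apply: (mulIf n_neq0).
rewrite -[LHS]natrM sum_Tcount_mul // !natrM natrX.
by rewrite -[_ ^ (n - (k + l))%N%:Z]/(_ ^+ _); field.
Qed.
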